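(* Consider the linearized equation $\mathbf{M}\ddot{\mathbf{x}}+\mathbf{G}\mathbf{x}=\mathbf{B}u$, $\mathbf{x}=[\delta x;\mathbf{x}_q]\in\mathbb{R}^{2n+2}$, $u\in\mathbb{R}^2$, of the chain pendulum on a cart about the equilibrium specified by $s=(s_1,\dots,s_n)\in\{1,-1\}^n$ and $x=0$, with the matrices defined in the context. Suppose that $\mathbf{M}$ is positive-definite. Then this linearized system is controllable if and only if the subsystem \[ \mathbf{M}_{qq}\ddot{\mathbf{x}}_q+\mathbf{G}_{qq}\mathbf{x}_q=\mathbf{M}_{qx}\mathbf{u} \] with control input $\mathbf{u}\in\mathbb{R}^2$ is controllable, or equivalently, if and only if \[ \mathrm{rank}\big[\lambda^2\mathbf{M}_{qq}+\mathbf{G}_{qq},\ \mathbf{M}_{qx}\big]=2n\quad\text{for every }\lambda\in\mathbb{C}. \]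
   Context: Let $n\ge1$, $e_1,e_2,e_3$ the standard basis of $\mathbb{R}^3$ ($e_3$ the direction of gravity), $g>0$, $C=[e_1,e_2]\in\mathbb{R}^{3\times2}$, and $\hat y$ the skew-symmetric matrix with $\hat yz=y\times z$. The system is a cart of mass $m>0$ with planar position $x\in\mathbb{R}^2$, driven by a horizontal force $u\in\mathbb{R}^2$, carrying a serial chain of $n$ links with spherical joints; link $i$ has length $l_i>0$, unit direction $q_i\in\mathsf{S}^2\subset\mathbb{R}^3$, and point mass $m_i>0$ at its outboard end. Define $M_{00}=m+\sum_{i=1}^n m_i$, $M_{0i}=\big(\sum_{a=i}^n m_a\big)l_iC^T\in\mathbb{R}^{2\times3}$, $M_{ij}=\big(\sum_{a=\max\{i,j\}}^n m_a\big)l_il_j$. An equilibrium is given by $q_i=s_ie_3$ with $s_i\in\{1,-1\}$, zero velocities, and $x=0$. Its linearization (with perturbations $x=\epsilon\delta x$, $q_i=\exp(\epsilon\hat\xi_i)s_ie_3$, $\xi_i\cdot e_3=0$, $\mathbf{x}_q=[C^T\xi_1;\dots;C^T\xi_n]\in\mathbb{R}^{2n}$) is $\mathbf{M}\ddot{\mathbf{x}}+\mathbf{G}\mathbf{x}=\mathbf{B}u$ with $\mathbf{M}=\begin{bmatrix}\mathbf{M}_{xx}&\mathbf{M}_{xq}\\\mathbf{M}_{qx}&\mathbf{M}_{qq}\end{bmatrix}$, $\mathbf{G}=\begin{bmatrix}0_2&0\\0&\mathbf{G}_{qq}\end{bmatrix}$, $\mathbf{B}=\begin{bmatrix}I_2\\0_{2n\times2}\end{bmatrix}$,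 where $\mathbf{M}_{xx}=M_{00}I_2$, $\mathbf{M}_{xq}=[-s_1M_{01}\hat e_3C,\dots,-s_nM_{0n}\hat e_3C]\in\mathbb{R}^{2\times2n}$, $\mathbf{M}_{qx}=\mathbf{M}_{xq}^T$, $\mathbf{M}_{qq}$ is the $2n\times2n$ block matrix with $(i,j)$ block $s_is_jM_{ij}I_2$, and $\mathbf{G}_{qq}=\mathrm{diag}\big[s_i\big(\sum_{a=i}^n m_a\big)g\,l_iI_2\big]_{i=1}^n$. Controllability refers to the standard notion for the linear system in first-order form with state $(\mathbf{x},\dot{\mathbf{x}})$. *)

From HB Require Import structures.
From mathcomp Require Import all_boot all_order all_algebra.
From mathcomp.real_closed Require Import complex.
Set Implicit Arguments. Unset Strict Implicit. Unset Printing Implicit Defensive.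
Import Order.TTheory GRing.Theory Num.Theory.
Local Open Scope ring_scope.

Section Defs.
Variable R : rcfType.

(* standard basis e_1, e_2, e_3 of R^3 (0-indexed: e_(k+1) = ebasis k) *)
Definition ebasis (k : nat) : 'cV[R]_3 := \col_(i < 3) ((i : nat) == k)%:R.
Definition e3 : 'cV[R]_3 := ebasis 2.

(* hat map: hat y *m z = y x z *)
Definition hat (y : 'cV[R]_3) : 'M[R]_3 :=
  let y1 := y (inord 0) 0 in let y2 := y (inord 1) 0 in let y3 := y (inord 2) 0 in
  \matrix_(i < 3, j < 3)
    match (i : nat), (j : nat) with
    | 0, 1 => - y3 | 0, 2 => y2
    | 1, 0 => y3   | 1, 2 => - y1
    | 2, 0 => - y2 | 2, 1 => y1
    | _, _ => 0 end.

Definition Cmat : 'M[R]_(3, 2) := \matrix_(i < 3, j < 2) ((i : nat) == j)%:R.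

(* Links are indexed 0..n-1 (link i of the paper is index i-1 here).
   mass : nat -> R (m_i), len : nat -> R (l_i), s : nat -> R (s_i). *)
Definition mu (n : nat) (mass : nat -> R) (i : nat) : R :=
  \sum_(i <= a < n) mass a.

Definition M00 (n : nat) (m : R) (mass : nat -> R) : R :=
  m + \sum_(0 <= a < n) mass a.

Definition M0i (n : nat) (mass len : nat -> R) (i : nat) : 'M[R]_(2, 3) :=
  (mu n mass i * len i) *: Cmat^T.

Definition Mij (n : nat) (mass len : nat -> R) (i j : nat) : R :=
  mu n mass (maxn i j) * len i * len j.

(* coordinates of x_q in R^(2n): row p belongs to link p %/ 2, component p %% 2 *)
Definition Mxx (n : nat) (m : R) (mass : nat -> R) : 'M[R]_2 :=
  (M00 n m mass)%:M.

Definition Mxq (n : nat) (mass len s : nat -> R) : 'M[R]_(2, 2 * n) :=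
  \matrix_(r < 2, q < 2 * n)
    ((- s (q %/ 2)%N) *: (M0i n mass len (q %/ 2)%N *m hat e3 *m Cmat))
      r (inord (q %% 2)%N).

Definition Mqx (n : nat) (mass len s : nat -> R) : 'M[R]_(2 * n, 2) :=
  (Mxq n mass len s)^T.

Definition Mqq (n : nat) (mass len s : nat -> R) : 'M[R]_(2 * n) :=
  \matrix_(p < 2 * n, q < 2 * n)
    (s (p %/ 2)%N * s (q %/ 2)%N * Mij n mass len (p %/ 2)%N (q %/ 2)%N
      * (((p %% 2)%N == (q %% 2)%N))%:R).

Definition Gqq (n : nat) (mass len s : nat -> R) (g : R) : 'M[R]_(2 * n) :=
  \matrix_(p < 2 * n, q < 2 * n)
    (s (p %/ 2)%N * mu n mass (p %/ 2)%N * g * len (p %/ 2)%N * ((p : nat) == q)%:R).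

Definition Mfull n m mass len s : 'M[R]_(2 + 2 * n) :=
  block_mx (Mxx n m mass) (Mxq n mass len s) (Mqx n mass len s) (Mqq n mass len s).

Definition Gfull n mass len s g : 'M[R]_(2 + 2 * n) :=
  block_mx (0 : 'M_2) 0 0 (Gqq n mass len s g).

Definition Bfull n : 'M[R]_(2 + 2 * n, 2) := col_mx 1%:M 0.

Definition posdef (k : nat) (A : 'M[R]_k) : Prop :=
  A^T = A /\ forall v : 'cV[R]_k, v != 0 -> 0 < (v^T *m A *m v) 0 0.

Definition controllable (k p : nat) (A : 'M[R]_k) (B : 'M[R]_(k, p)) : Prop :=
  \rank (\mxrow_(i < k) (A ^+ i *m B)) = k.

Definition first_order_A (k : nat) (Mm Gm : 'M[R]_k) : 'M[R]_(k + k) :=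
  block_mx 0 1%:M (- (invmx Mm *m Gm)) 0.
Definition first_order_B (k p : nat) (Mm : 'M[R]_k) (Bm : 'M[R]_(k, p))
  : 'M[R]_(k + k, p) := col_mx 0 (invmx Mm *m Bm).

Definition second_order_controllable (k p : nat) (Mm Gm : 'M[R]_k)
  (Bm : 'M[R]_(k, p)) : Prop :=
  controllable (first_order_A Mm Gm) (first_order_B Mm Bm).

Definition toC (k l : nat) (A : 'M[R]_(k, l)) : 'M[R[i]]_(k, l) :=
  map_mx (fun x => (x%:C)%C) A.

End Defs.

From HB Require Import structures.
From mathcomp Require Import all_boot all_order all_algebra.
From mathcomp.real_closed Require Import complex.
Set Implicit Arguments. Unset Strict Implicit. Unset Printing Implicit Defensive.
Import Order.TTheory GRing.Theory Num.Theory.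
Local Open Scope ring_scope.

(* The Popov-Belevitch-Hautus test reduces controllability of x' = A x + B u
   over an algebraically closed field to the absence of a left eigenvector w of
   A with w B = 0.  For the first-order form of M x'' + G x = B u, the left
   eigenvectors of the companion matrix are (lam z M, z M) with
   z (lam^2 M + G) = 0, so controllability becomes the rank condition
   rank [lam^2 M + G, B] = k for all complex lam.  For the cart-pendulum,
   B = [I; 0] forces the cart component of z to vanish; the remaining equations
   say z_q (lam^2 M_qq + G_qq) = 0 and lam^2 z_q M_qx = 0, which is the test for
   the subsystem when lam != 0, and forces z_q = 0 when lam = 0 since G_qq is
   invertible. *)

Section Hautus.
Variable F : fieldType.

Definition krylov_mx k p (A : 'M[F]_k) (B : 'M[F]_(k, p)) :=
  \mxrow_(i < k) (A ^+ i *m B).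

Lemma row_free_kerP m n (M : 'M[F]_(m, n)) :
  row_free M <-> forall w : 'rV_m, w *m M = 0 -> w = 0.
Proof.
split=> [freeM w wM0 | ]; last exact: inj_row_free.
by apply: (row_free_inj freeM); rewrite wM0 mul0mx.
Qed.

Lemma krylov_mx_mul_eq0 m k p (A : 'M[F]_k) (B : 'M[F]_(k, p)) (w : 'M_(m, k)) :
  w *m krylov_mx A B = 0 <-> forall i : 'I_k, w *m A ^+ i *m B = 0.
Proof.
rewrite mul_mxrow -(mxrow0 (q_ := fun _ : 'I_k => p)) -eq_mxrowP.
by split=> H i; [rewrite -mulmxA H | rewrite mulmxA H].
Qed.

(* Cayley-Hamilton writes A ^+ k as a combination of the lower powers of A. *)
Lemma krylov_annihilator_expn m k p (A : 'M[F]_k) (B : 'M[F]_(k, p)) (w : 'M_(m, k)) :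
  w *m krylov_mx A B = 0 -> w *m A ^+ k *m B = 0.
Proof.
move/krylov_mx_mul_eq0; case: k A B w => [|k] A B w wAB0.
  by rewrite [B]flatmx0 mulmx0.
have lead1 : (char_poly A)`_k.+1 = 1.
  by move/monicP: (char_poly_monic A); rewrite lead_coefE size_char_poly.
have := Cayley_Hamilton A.
rewrite -[char_poly A]coefK size_char_poly poly_def big_ord_recr /= lead1 scale1r.
rewrite rmorphD /= rmorphXn /= horner_mx_X rmorph_sum /=.
move/eqP; rewrite addrC addr_eq0 => /eqP ->.
rewrite mulmxN mulNmx mulmx_sumr mulmx_suml big1 ?oppr0 // => i _.
by rewrite linearZ /= rmorphXn /= horner_mx_X -scalemxAr -scalemxAl wAB0 scaler0.
Qed.

Lemma kermx_krylov_stable k p (A : 'M[F]_k) (B : 'M[F]_(k, p)) :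
  (kermx (krylov_mx A B) *m A <= kermx (krylov_mx A B))%MS.
Proof.
set V := kermx _; have VK0 : V *m krylov_mx A B = 0 by apply/sub_kermxP.
apply/sub_kermxP/krylov_mx_mul_eq0 => i; rewrite -(mulmxA V) mulmxE -exprS.
have [ltik | leki] := ltnP i.+1 k.
  exact: (krylov_mx_mul_eq0 _ _ _).1 VK0 (Ordinal ltik).
have -> : i.+1 = k by apply/eqP; rewrite eqn_leq leki ltn_ord.
exact: krylov_annihilator_expn.
Qed.
End Hautus.

Section ClosedField.
Variable F : closedFieldType.

Lemma stable_eigenvector m k (A : 'M[F]_k) (V : 'M[F]_(m, k)) :
  V != 0 -> (V *m A <= V)%MS ->
  exists lam, exists2 w : 'rV_k, w != 0 & (w <= V)%MS /\ w *m A = lam *: w.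
Proof.
move=> Vnz VA_V; set Vb := row_base V.
have VbA_Vb : (Vb *m A <= Vb)%MS by rewrite (eqmxMr A (eq_row_base V)) !eq_row_base.
set X := Vb *m A *m pinvmx Vb.
have XVb : X *m Vb = Vb *m A by rewrite mulmxKpV.
have [lam] : exists lam, root (char_poly X) lam.
  by apply/closed_rootP; rewrite size_char_poly eqSS mxrank_eq0.
rewrite -eigenvalue_root_char => /eigenvalueP [y yX ynz].
exists lam, (y *m Vb); last split.
- by rewrite mulmx_free_eq0 ?row_base_free.
- by rewrite (submx_trans (submxMl y Vb)) ?eq_row_base.
- by rewrite -mulmxA -XVb mulmxA yX -scalemxAl.
Qed.

(* The Popov-Belevitch-Hautus test: the kernel of the Krylov matrix is
   A-stable, so if nonzero it contains a left eigenvector of A. *)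
Lemma hautus_test k p (A : 'M[F]_k) (B : 'M[F]_(k, p)) :
  row_free (krylov_mx A B) <->
  forall lam (w : 'rV_k), w *m A = lam *: w -> w *m B = 0 -> w = 0.
Proof.
split=> [/row_free_kerP krylov_free lam w wA wB0 | hautus].
  apply/krylov_free/krylov_mx_mul_eq0 => i.
  have wAi : forall j, w *m A ^+ j = lam ^+ j *: w.
    elim=> [|j IHj]; first by rewrite !expr0 mulmx1 scale1r.
    by rewrite !exprSr -mulmxE mulmxA IHj -scalemxAl wA scalerA.
  by rewrite wAi -scalemxAl wB0 scaler0.
rewrite -kermx_eq0; apply/negPn/negP => Knz.
have [lam [w wnz [wK wA]]] := stable_eigenvector Knz (kermx_krylov_stable A B).
have k_gt0 : (0 < k)%N.
  by rewrite (leq_trans _ (rank_leq_col w)) // lt0n mxrank_eq0.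
have /krylov_mx_mul_eq0/(_ (Ordinal k_gt0)) : w *m krylov_mx A B = 0 by apply/sub_kermxP.
rewrite expr0 mulmx1 => /(hautus lam w wA) w0.
by rewrite w0 eqxx in wnz.
Qed.
End ClosedField.

Section SecondOrder.
Variable F : fieldType.

Definition second_order_hautus k p (M G : 'M[F]_k) (B : 'M[F]_(k, p)) : Prop :=
  forall lam (z : 'rV_k), z *m (lam ^+ 2 *: M + G) = 0 -> z *m B = 0 -> z = 0.

Lemma second_order_hautus_rank k p (M G : 'M[F]_k) (B : 'M[F]_(k, p)) :
  second_order_hautus M G B <-> forall lam, \rank (row_mx (lam ^+ 2 *: M + G) B) = k.
Proof.
have rank_full X : \rank X = k <-> row_free (X : 'M_(k, k + p)).
  by split=> [/eqP | /eqP].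
split=> [hautus lam | rank_full_lam lam z].
  apply/rank_full/row_free_kerP => z.
  by rewrite mul_mx_row -row_mx0 => /eq_row_mx [zMG zB]; apply: hautus zMG zB.
move/rank_full/row_free_kerP: (rank_full_lam lam) => free zMG zB.
by apply: free; rewrite mul_mx_row zMG zB row_mx0.
Qed.

(* Left eigenvectors of the companion matrix are (lam z M, z M) with
   z (lam^2 M + G) = 0. *)
Lemma companion_hautus k p (M G : 'M[F]_k) (B : 'M[F]_(k, p)) : M \in unitmx ->
  (forall lam (w : 'rV_(k + k)),
     w *m block_mx 0 1%:M (- (invmx M *m G)) 0 = lam *: w ->
     w *m col_mx 0 (invmx M *m B) = 0 -> w = 0) <-> second_order_hautus M G B.
Proof.
move=> Munit; split=> [hautus lam z zMG zB | hautus lam w].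
  set v := z *m M.
  have := hautus lam (row_mx (lam *: v) v).
  rewrite mul_row_block mul_row_col !mulmx0 addr0 add0r mulmx1 mulmxN scale_row_mx.
  rewrite /v !mulmxA mulmxK // scalerA -expr2.
  have -> : - (z *m G) = lam ^+ 2 *: (z *m M).
    by apply/eqP; rewrite eq_sym -addr_eq0 scalemxAr -mulmxDr zMG.
  rewrite add0r zB => /(_ erefl erefl); rewrite -row_mx0 => /eq_row_mx [_ zM0].
  by rewrite -(mulmxK Munit z) zM0 mul0mx.
rewrite -[w]hsubmxK mul_row_block mul_row_col !mulmx0 add0r addr0 mulmx1.
rewrite scale_row_mx add0r => /eq_row_mx [w1_eq w2_eq] w2B.
set w1 := lsubmx w in w1_eq w2_eq w2B *; set w2 := rsubmx w in w1_eq w2_eq w2B *.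
have w2MG : w2 *m invmx M *m G = - (lam ^+ 2 *: w2).
  by rewrite -mulmxA -[LHS]opprK -mulmxN w1_eq w2_eq scalerA -expr2.
have z0 : w2 *m invmx M = 0.
  apply: (hautus lam); last by rewrite -mulmxA.
  by rewrite mulmxDr -scalemxAr mulmxKV // w2MG subrr.
have w20 : w2 = 0 by rewrite -(mulmxKV Munit w2) z0 mul0mx.
by rewrite w2_eq w20 scaler0 row_mx0.
Qed.

Lemma block_hautus k (Mxx : 'M[F]_2) (Mxq : 'M[F]_(2, k)) (Mqx : 'M[F]_(k, 2))
    (Mqq Gqq : 'M[F]_k) : Gqq \in unitmx ->
  second_order_hautus (block_mx Mxx Mxq Mqx Mqq) (block_mx 0 0 0 Gqq)
                      (col_mx 1%:M 0 : 'M_(2 + k, 2))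
  <-> second_order_hautus Mqq Gqq Mqx.
Proof.
move=> Gunit; split=> [hautus lam z zMG zB | hautus lam z].
  have := hautus lam (row_mx 0 z).
  rewrite scale_block_mx add_block_mx mul_row_block mul_row_col !mul0mx !add0r.
  rewrite mulmx0 zMG addr0 -scalemxAr zB scaler0 row_mx0 => /(_ erefl erefl).
  by rewrite -row_mx0 => /eq_row_mx [].
rewrite -[z]hsubmxK scale_block_mx add_block_mx mul_row_block mul_row_col.
rewrite mulmx1 mulmx0 => zMG; rewrite addr0 => zx0.
rewrite zx0 !mul0mx !add0r in zMG *.
move: zMG; rewrite -row_mx0 addr0 -scalemxAr => /eq_row_mx [zMqx zMG].
congr row_mx.
have [lam2_0 | lam2_nz] := eqVneq (lam ^+ 2) 0.
  move: zMG; rewrite lam2_0 scale0r add0r => zG.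
  by rewrite -(mulmxK Gunit (rsubmx z)) zG mul0mx.
apply: (hautus lam _ zMG).
by move/eqP: zMqx; rewrite scaler_eq0 (negbTE lam2_nz) => /eqP.
Qed.
End SecondOrder.

Lemma map_krylov_mx (F K : fieldType) (f : {rmorphism F -> K}) k p
    (A : 'M[F]_k) (B : 'M[F]_(k, p)) :
  map_mx f (krylov_mx A B) = krylov_mx (map_mx f A) (map_mx f B).
Proof.
transitivity (\mxrow_(i < k) map_mx f (A ^+ i *m B)).
  by apply/matrixP => i j; rewrite !mxE.
by apply: eq_mxrow => i; rewrite map_mxM rmorphXn.
Qed.

Section RealSystem.
Variable R : rcfType.

Lemma toCE k l (A : 'M[R]_(k, l)) : toC A = map_mx (real_complex R) A.
Proof. by []. Qed.

Lemma controllableE k p (A : 'M[R]_k) (B : 'M[R]_(k, p)) :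
  controllable A B <-> row_free (krylov_mx A B).
Proof. by split=> [/eqP | /eqP]. Qed.

Lemma second_order_controllableP k p (M G : 'M[R]_k) (B : 'M[R]_(k, p)) :
  M \in unitmx ->
  second_order_controllable M G B <-> second_order_hautus (toC M) (toC G) (toC B).
Proof.
move=> Munit; rewrite /second_order_controllable controllableE.
rewrite -(row_free_map (real_complex R)) map_krylov_mx hautus_test.
rewrite !toCE -companion_hautus ?map_unitmx //.
rewrite /first_order_A /first_order_B map_block_mx map_col_mx.
by rewrite !map_mx0 map_mx1 map_mxN !map_mxM map_invmx.
Qed.

Lemma posdef_unitmx k (M : 'M[R]_k) : posdef M -> M \in unitmx.
Proof.
move=> [_ M_pos]; rewrite unitmxE unitfE; apply/negP => /det0P [v vnz vM0].
have := M_pos v^T; rewrite trmx_eq0 => /(_ vnz).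
by rewrite trmxK vM0 mul0mx mxE ltxx.
Qed.

Lemma posdef_drsubmx k l (A : 'M[R]_k) (B : 'M[R]_(k, l)) (C : 'M[R]_(l, k))
    (D : 'M[R]_l) :
  posdef (block_mx A B C D) -> posdef D.
Proof.
move=> [sym pos]; split.
  by move: sym; rewrite tr_block_mx => /eq_block_mx [].
move=> v vnz; have := pos (col_mx 0 v); rewrite col_mx_eq0 eqxx vnz => /(_ isT).
by rewrite tr_col_mx trmx0 mul_row_block !mul0mx !add0r mul_row_col mulmx0 add0r.
Qed.
End RealSystem.

Lemma mu_gt0 (R : rcfType) n (mass : nat -> R) i :
  (forall a, (a < n)%N -> 0 < mass a) -> (i < n)%N -> 0 < mu n mass i.
Proof.
move=> mass_pos ltin; rewrite /mu big_ltn // ltr_wpDr ?mass_pos //.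
rewrite big_nat_cond sumr_ge0 // => a /andP[/andP[_ ltan] _].
exact/ltW/mass_pos.
Qed.

Lemma Gqq_unitmx (R : rcfType) n (g : R) (mass len s : nat -> R) :
  0 < g ->
  (forall i, (i < n)%N -> 0 < mass i) ->
  (forall i, (i < n)%N -> 0 < len i) ->
  (forall i, (i < n)%N -> s i = 1 \/ s i = -1) ->
  Gqq n mass len s g \in unitmx.
Proof.
move=> g_pos mass_pos len_pos s_sign.
set d := \row_(p < 2 * n) (s (p %/ 2)%N * mu n mass (p %/ 2)%N * g * len (p %/ 2)%N).
have -> : Gqq n mass len s g = diag_mx d.
  by apply/matrixP => p q; rewrite !mxE mulr_natr.
rewrite unitmxE det_diag unitfE; apply/prodf_neq0 => p _.
have ltpn : (p %/ 2 < n)%N by rewrite ltn_divLR // -[(n * 2)%N]mulnC.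
have s_neq0 : s (p %/ 2)%N != 0.
  by case: (s_sign _ ltpn) => ->; rewrite ?oppr_eq0 oner_eq0.
by rewrite mxE !mulf_neq0 // gt_eqF ?mu_gt0 ?len_pos.
Qed.

Unset Implicit Arguments.
Set Strict Implicit.

Theorem proposition3 (R : rcfType) (n : nat) (m g : R) (mass len s : nat -> R) :
  (0 < n)%N -> 0 < m -> 0 < g ->
  (forall i, (i < n)%N -> 0 < mass i) ->
  (forall i, (i < n)%N -> 0 < len i) ->
  (forall i, (i < n)%N -> s i = 1 \/ s i = -1) ->
  posdef (Mfull n m mass len s) ->
  (second_order_controllable (Mfull n m mass len s) (Gfull n mass len s g) (Bfull R n)
     <-> second_order_controllable (Mqq n mass len s) (Gqq n mass len s g)
                                   (Mqx n mass len s))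
  /\
  (second_order_controllable (Mqq n mass len s) (Gqq n mass len s g) (Mqx n mass len s)
     <-> forall lam : R[i],
       \rank (row_mx (lam ^+ 2 *: toC (Mqq n mass len s) + toC (Gqq n mass len s g))
                     (toC (Mqx n mass len s))) = (2 * n)%N).
Proof.
move=> _ _ g_pos mass_pos len_pos s_sign Mpos.
have Munit := posdef_unitmx Mpos.
have Mqq_unit := posdef_unitmx (posdef_drsubmx Mpos).
have Gqq_unit := Gqq_unitmx g_pos mass_pos len_pos s_sign.
rewrite (second_order_controllableP _ _ Munit) (second_order_controllableP _ _ Mqq_unit).
rewrite -second_order_hautus_rank !toCE /Mfull /Gfull /Bfull.
rewrite !map_block_mx map_col_mx map_mx1 !map_mx0 block_hautus ?map_unitmx //.
Qed.
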